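(* Let $n\in\mathbb{N}$. The space $\mathcal{C}^n[a,b]$ consists exactly of those functions $f$ on $[a,b]$ that can be represented in the form $$f(x)=\frac{1}{(n-1)!}\int_a^x(x-t)^{n-1}\phi(t)\,dt+\sum_{k=0}^{n-1}c_k(x-a)^k,\qquad x\in[a,b],$$ where $\phi\in D_{HK}$ and $c_0,\dots,c_{n-1}$ are arbitrary real constants.
   Context: Fix real numbers $a<b$. Let $C_0=\{F\in C[a,b]:F(a)=0\}$. A distribution $\phi$ on $(a,b)$ is Henstock–Kurzweil integrable if $\phi=F'$ (distributional derivative) for some (unique) $F\in C_0$; its distributional Henstock–Kurzweil integral is $\int_c^d \phi=F(d)-F(c)$, and integrals of $\phi$ against functions of bounded variation (such as $t\mapsto(x-t)^{n-1}$) are defined via $\int_a^x\phi g=F(x)g(x)-\int_a^xF\,dg$. $D_{HK}$ denotes the space of such distributions. For $n\in\mathbb{N}$, $\mathcal{C}^n[a,b]$ is the set of functions $F$ on $[a,b]$ whose classical derivative $F^{(n-1)}=\left(\frac{d}{dx}\right)^{n-1}F$ exists and is continuous on $[a,b]$ (so $\mathcal{C}^1[a,b]=C[a,b]$). *)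

From HB Require Import structures.
From mathcomp Require Import all_boot all_order all_algebra.
From mathcomp Require Import all_classical all_reals all_analysis.
Set Implicit Arguments. Unset Strict Implicit. Unset Printing Implicit Defensive.
Import Order.TTheory GRing.Theory Num.Theory.
Import numFieldNormedType.Exports.
Local Open Scope classical_set_scope.
Local Open Scope ring_scope.

Section Defs.
Variable R : realType.

Definition cI (a b : R) : set R := [set x | a <= x <= b].

(* d is the (classical, one-sided at the endpoints) derivative of f at x,
   relative to [a,b] *)
Definition deriv_within (a b : R) (f : R -> R) (x d : R) : Prop :=
  (fun y => (f y - f x) / (y - x)) @ within (cI a b) (x^') --> d.

(* C^n[a,b]: F^(n-1) exists (classically, on [a,b]) and is continuous on [a,b].
   D k plays the role of F^(k). *)
Definition Cn (a b : R) (n : nat) (f : R -> R) : Prop :=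
  exists D : nat -> R -> R,
    D 0%N = f /\
    (forall k : nat, (k.+1 < n)%N ->
       forall x, cI a b x -> deriv_within a b (D k) x (D k.+1 x)) /\
    {within cI a b, continuous (D n.-1)}.

Definition C0 (a b : R) (F : R -> R) : Prop :=
  {within cI a b, continuous F} /\ F a = 0.

Definition test_fun (a b : R) (psi : R -> R) : Prop :=
  (forall (k : nat) (x : R), derivable (derive1n k psi) x 1) /\
  exists c d : R, a < c /\ c <= d /\ d < b /\
    forall x, (x < c \/ d < x) -> psi x = 0.

(* distributions on (a,b) are represented as functionals on test functions;
   phi = F' in the distributional sense *)
Definition distr_deriv_of (a b : R) (phi : (R -> R) -> R) (F : R -> R) : Prop :=
  forall psi, test_fun a b psi ->
    phi psi = - \int[lebesgue_measure]_(t in cI a b) (F t * derive1 psi t).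

Definition D_HK (a b : R) (phi : (R -> R) -> R) : Prop :=
  exists F, C0 a b F /\ distr_deriv_of a b phi F.

(* int_a^x phi g := F(x) g(x) - int_a^x F dg, for g continuously
   differentiable with derivative dg' (Stieltjes integral written as
   int_a^x F g'), where F is the primitive of phi in C_0. *)
Definition HK_int_against (a x : R) (F g g' : R -> R) : R :=
  F x * g x - \int[lebesgue_measure]_(t in cI a x) (F t * g' t).

End Defs.

From HB Require Import structures.
From mathcomp Require Import all_boot all_order all_algebra.
From mathcomp Require Import all_classical all_reals all_analysis.
From mathcomp Require Import ring lra.
Import Order.TTheory GRing.Theory Num.Theory.
Import numFieldNormedType.Exports.
Local Open Scope classical_set_scope.
Local Open Scope ring_scope.

(* Write n = m + 1.  As F is continuous, the integration by parts built into
   the HK integral turns the formula into f = I^m F + P, where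
   I^m F x = 1/(m-1)! int_a^x F(t) (x - t)^(m-1) dt is the m-fold primitive of
   F vanishing at a (Cauchy's formula for repeated integration) and P is a
   polynomial of degree < n in x - a.  Differentiating, (I^m F)' = I^(m-1) F,
   so such an f has m derivatives on [a, b], the last one F + const being
   continuous.  Conversely, if f^(m) is continuous then, by induction on m,
   f' = I^(m-1) h + q with h = f^(m) - f^(m)(a); taking Q with Q' = q and
   Q(a) = f(a), the function f - I^m h - Q has zero derivative on [a, b] and
   vanishes at a, so it is zero by the mean value theorem. *)

Lemma cI_itv {R : realType} (a b : R) : cI a b = [set` `[a, b]].
Proof. by apply/seteqP; split => t /=; rewrite in_itv. Qed.

Section deriv_within.
Context {R : realType} {a b : R}.
Local Notation A := (cI a b).
Local Notation Dw := (deriv_within a b).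
Implicit Types (f g : R -> R) (x c df dg : R).

#[local] Instance within_dnbhs_filter x : Filter (within A x^').
Proof. by apply: within_filter; exact: Proper_dnbhs_numFieldType. Qed.

Let within_dnbhsE x (P : set R) :
  (forall y, y != x -> A y -> P y) -> within A x^' P.
Proof. by move=> H; apply: (@filterE R (nbhs x)) => y /= yx Ay; exact: H. Qed.

Lemma eq_deriv_within [f g x df] : {in A, f =1 g} -> A x ->
  Dw g x df -> Dw f x df.
Proof.
move=> fg Ax; apply: cvg_trans; apply: near_eq_cvg.
by apply: within_dnbhsE => y _ Ay; rewrite !fg ?inE.
Qed.

Lemma is_derive_deriv_within [f x df] : is_derive x 1 f df -> Dw f x df.
Proof.
move=> /is_derive1_caratheodory [q [fE cq qx]].
have : q @ within A x^' --> df.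
  by rewrite -qx; apply: cvg_within_filter; exact/continuous_withinNx.
apply: cvg_trans; apply: near_eq_cvg; apply: within_dnbhsE => y yx _.
by rewrite fE mulfK // subr_eq0.
Qed.

Lemma deriv_within_cst c x : Dw (fun=> c) x 0.
Proof. exact/is_derive_deriv_within. Qed.

Lemma deriv_within_id x : Dw id x 1.
Proof. exact/is_derive_deriv_within. Qed.

Lemma deriv_withinD [f g x df dg] : Dw f x df -> Dw g x dg ->
  Dw (fun y => f y + g y) x (df + dg).
Proof.
move=> hf hg; apply: cvg_trans (cvgD hf hg); apply: near_eq_cvg.
by apply: within_dnbhsE => y _ _; rewrite -mulrDl opprD addrACA.
Qed.

Lemma deriv_withinB [f g x df dg] : Dw f x df -> Dw g x dg ->
  Dw (fun y => f y - g y) x (df - dg).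
Proof.
move=> hf hg; apply: cvg_trans (cvgB hf hg); apply: near_eq_cvg.
by apply: within_dnbhsE => y _ _; rewrite !fctE -mulrBl; congr (_ / _); ring.
Qed.

Let within_nbhs_dnbhs g x :
  g @ within A x^' --> g x -> g @ within A (nbhs x) --> g x.
Proof.
move=> gx U /= gU; have := gx U gU; rewrite /within/= /dnbhs/within/=.
apply: (@filterS _ (nbhs x)) => y gyU Ay.
by have [->|/gyU/(_ Ay)//] := eqVneq y x; exact: nbhs_singleton gU.
Qed.

Lemma deriv_within_cvg [f x df] : Dw f x df -> f @ within A (nbhs x) --> f x.
Proof.
move=> hf; apply: within_nbhs_dnbhs.
have yx0 : (fun y => y - x) @ within A x^' --> 0.
  rewrite -(subrr x); apply: cvgB (cvg_cst x).
  by do 2 apply: cvg_within_filter; exact: cvg_id.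
have : (fun y => (f y - f x) / (y - x) * (y - x) + f x) @ within A x^'
    --> df * 0 + f x by apply: cvgD (cvg_cst _); exact: cvgM.
rewrite mulr0 add0r; apply: cvg_trans; apply: near_eq_cvg.
by apply: within_dnbhsE => y yx _; rewrite divfK ?subr_eq0 // subrK.
Qed.

Let within_dnbhs_nbhs g x (l : R) :
  g @ within A (nbhs x) --> l -> g @ within A x^' --> l.
Proof.
move=> gl U /= lU; have := gl U lU; rewrite /within/= /dnbhs/within/=.
by apply: (@filterS _ (nbhs x)) => y + _.
Qed.

Lemma deriv_withinM [f g x df dg] : Dw f x df -> Dw g x dg ->
  Dw (fun y => f y * g y) x (df * g x + f x * dg).
Proof.
move=> hf hg.
have gx : g @ within A x^' --> g x.
  by apply: within_dnbhs_nbhs; exact: deriv_within_cvg hg.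
have : (fun y => (f y - f x) / (y - x) * g y + f x * ((g y - g x) / (y - x)))
    @ within A x^' --> df * g x + f x * dg.
  by apply: cvgD; [exact: cvgM|exact: cvgMl_tmp].
apply: cvg_trans; apply: near_eq_cvg; apply: within_dnbhsE => y _ _.
by rewrite mulrAC mulrA -mulrDl; congr (_ / _); ring.
Qed.

Lemma deriv_withinZ c [f x df] : Dw f x df -> Dw (fun y => c * f y) x (c * df).
Proof.
move=> /(deriv_withinM (deriv_within_cst c x)).
by rewrite mul0r add0r.
Qed.

Lemma deriv_within_continuous [f] f' :
  (forall x, A x -> Dw f x (f' x)) -> {within A, continuous f}.
Proof.
by move=> hf; apply/subspace_continuousP => x /hf/deriv_within_cvg.
Qed.

Lemma deriv_within_is_derive [f x df] : a < x < b -> Dw f x df ->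
  is_derive x 1 f df.
Proof.
move=> /andP[ax xb] hf; apply/is_derive1_caratheodory.
exists (fun y => if y == x then df else (f y - f x) / (y - x)); split.
- move=> y; case: eqP => [->|/eqP yx]; first by rewrite !subrr mulr0.
  by rewrite divfK // subr_eq0.
- apply/continuous_withinNx; rewrite /= eqxx.
  have Anear : \forall y \near x, A y.
    by apply: filterS2 (lt_le_nbhsr ax) (lt_le_nbhsl xb) => y ay yb; exact/andP.
  have hq : (fun y => (f y - f x) / (y - x)) @ x^' --> df.
    move=> U dfU.
    have hU : \forall y \near x, y != x -> A y -> U ((f y - f x) / (y - x)).
      exact: hf U dfU.
    suff : \forall y \near x, y != x -> U ((f y - f x) / (y - x)) by [].
    by apply: filterS2 hU Anear => y + Ay yx; exact.
  apply: cvg_trans hq; apply: near_eq_cvg.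
  by apply: filterS (nbhs_dnbhs_neq x) => y /negbTE ->.
- by rewrite eqxx.
Qed.

Lemma deriv_within0_cst [e] x : (forall y, A y -> Dw e y 0) -> A x ->
  e x = e a.
Proof.
move=> he /andP[ax xb].
have e'0 y : y \in `]a, x[ -> is_derive y 1 e 0.
  rewrite in_itv/= => /andP[ay yx]; apply: deriv_within_is_derive.
    by rewrite ay (lt_le_trans yx).
  by apply: he; rewrite /cI/= ltW//= ltW// (lt_le_trans yx).
have ce : {within `[a, x], continuous e}.
  apply: continuous_subspaceW _ (deriv_within_continuous _ he).
  by rewrite cI_itv; apply: subset_itv; rewrite bnd_simp.
have [c _] := MVT_segment ax e'0 ce.
by rewrite mul0r => /eqP; rewrite subr_eq0 => /eqP.
Qed.
End deriv_within.

Lemma within_continuousM {T : topologicalType} {K : numFieldType} (A : set T)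
    (f g : T -> K) :
  {within A, continuous f} -> {within A, continuous g} ->
  {within A, continuous (fun t => f t * g t)}.
Proof. by move=> cf cg x; apply: cvgM; [exact: cf|exact: cg]. Qed.

Lemma within_continuous_horner {R : realType} (A : set R) (q : {poly R}) :
  {within A, continuous (fun t => q.[t])}.
Proof. exact/continuous_subspaceT/continuous_horner. Qed.

Lemma within_continuous_integrable {R : realType} [a b x : R] [h : R -> R] :
  {within cI a b, continuous h} -> cI a b x ->
  lebesgue_measure.-integrable `[a, x] (EFin \o h).
Proof.
move=> ch /andP[_ xb]; apply: continuous_compact_integrable.
  exact: segment_compact.
apply: continuous_subspaceW ch.
by rewrite cI_itv; apply: subset_itv; rewrite bnd_simp.
Qed.

Section primitive.
Context {R : realType} {a b : R}.
Local Notation A := (cI a b).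
Local Notation mu := (@lebesgue_measure R).
Implicit Types h : R -> R.

Definition clamp (t : R) := Num.max a (Num.min t b).

Lemma clamp_cI t : a <= b -> A (clamp t).
Proof. by move=> ab; rewrite /cI/= le_max lexx ge_max ab ge_min lexx orbT. Qed.

Lemma clamp_id t : A t -> clamp t = t.
Proof. by move=> /andP[ta tb]; rewrite /clamp min_l // max_r. Qed.

Lemma continuous_clamp : continuous clamp.
Proof.
move=> t; apply: (@continuous_max _ _ (cst a) (fun t => Num.min t b)).
  exact: cvg_cst.
by apply: continuous_min; [exact: cvg_id|exact: cvg_cst].
Qed.

Lemma continuous_comp_clamp [h] : a <= b -> {within A, continuous h} ->
  continuous (h \o clamp).
Proof.
move=> ab /subspace_continuousP ch t; apply: cvg_comp (ch _ (clamp_cI t ab)).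
move=> P /continuous_clamp AP.
have {}AP : \forall z \near t, A (clamp z) -> P (clamp z) := AP.
suff : \forall z \near t, P (clamp z) by [].
by apply: filterS AP => z; apply; exact: clamp_cI.
Qed.

(* The derivatives at a and b are one-sided, so the fundamental theorem of
   calculus is applied to the continuous extension [h \o clamp] of [h]. *)
Lemma deriv_within_primitive h x : {within A, continuous h} -> A x ->
  deriv_within a b (fun y => \int[mu]_(t in cI a y) h t) x (h x).
Proof.
move=> ch Ax; have /andP[ax xb] := Ax.
pose H y := \int[mu]_(t in `[a - 1, y]) (h \o clamp) t.
have ch_ext : continuous (h \o clamp) :=
  continuous_comp_clamp (le_trans ax xb) ch.
have hint u v : mu.-integrable `[u, v] (EFin \o (h \o clamp)).
  apply: continuous_compact_integrable; first exact: segment_compact.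
  exact: continuous_subspaceT.
have x1 : x < x + 1 by lra.
have a1x : a - 1 < x by lra.
have [dH H'x] := continuous_FTC1_closed x1 (hint _ _) a1x (ch_ext x).
have DH : deriv_within a b H x (h x).
  apply/is_derive_deriv_within/(DeriveDef dH).
  by rewrite -derive1E H'x /= clamp_id.
have HE : {in A, (fun y => \int[mu]_(t in cI a y) h t) =1 fun y => H y - H a}.
  move=> y /[1!inE] /andP[ay yb].
  rewrite /H Rintegral_itvB ?bnd_simp ?ay //; last by lra.
  rewrite Rintegral_itv_obnd_cbnd; last first.
    by apply: integrableS (hint a y) => //; apply: subset_itv; rewrite bnd_simp.
  rewrite cI_itv; apply: eq_Rintegral => t /[!inE] /andP[ta ty] /=.
  by rewrite clamp_id //; apply/andP; split => //; exact: le_trans yb.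
apply: (eq_deriv_within HE Ax); rewrite -[h x]subr0.
exact: deriv_withinB DH (deriv_within_cst _ _).
Qed.

End primitive.

Definition cauchy_int {R : realType} (a : R) (p : nat) (h : R -> R) (x : R) :=
  \int[lebesgue_measure]_(t in cI a x) (h t * (x - t) ^+ p).

(* The m-fold primitive of [h] vanishing at [a], by Cauchy's formula. *)
Definition iterated_integral {R : realType} (a : R) (m : nat) (h : R -> R)
    (x : R) :=
  if m is p.+1 then p`!%:R^-1 * cauchy_int a p h x else h x.

Section iterated_integral.
Context {R : realType} {a b : R}.
Local Notation A := (cI a b).
Local Notation Dw := (deriv_within a b).
Local Notation cw h := {within A, continuous h}.
Implicit Types (h : R -> R) (x : R).

Lemma within_continuous_cauchy_integrand x p [h] :
  cw h -> cw (fun t => h t * (x - t) ^+ p).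
Proof.
move=> ch; apply: within_continuousM ch _.
have -> : (fun t => (x - t) ^+ p) = fun t => ((x%:P - 'X) ^+ p).[t].
  by apply/funext => t; rewrite !hornerE.
exact: (within_continuous_horner A).
Qed.

Lemma within_continuous_idM [h] : cw h -> cw (fun t => t * h t).
Proof.
apply: within_continuousM; have -> : (fun t : R => t) = fun t => 'X.[t].
  by apply/funext => t; rewrite hornerX.
exact: (within_continuous_horner A).
Qed.

(* Splitting (x - t)^(p+1) = x (x - t)^p - t (x - t)^p takes x out of the
   integrand, so that the product rule replaces differentiation under the
   integral sign. *)
Lemma cauchy_intS p [h x] : cw h -> A x ->
  cauchy_int a p.+1 h x =
    x * cauchy_int a p h x - cauchy_int a p (fun t => t * h t) x.
Proof.
move=> ch Ax; rewrite /cauchy_int cI_itv.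
have int1 := within_continuous_integrable
  (within_continuous_cauchy_integrand x p ch) Ax.
have int2 := within_continuous_integrable
  (within_continuous_cauchy_integrand x p (within_continuous_idM ch)) Ax.
rewrite -RintegralZl // -RintegralB //; last exact: (integrableZl _ x int1).
by apply: eq_Rintegral => t _; rewrite exprS; ring.
Qed.

Lemma deriv_within_cauchy_int0 [h x] : cw h -> A x ->
  Dw (cauchy_int a 0 h) x (h x).
Proof.
move=> ch Ax.
have -> : cauchy_int a 0 h = fun y => \int[lebesgue_measure]_(t in cI a y) h t.
  by apply/funext => y; apply: eq_Rintegral => t _; rewrite expr0 mulr1.
exact: deriv_within_primitive.
Qed.

Lemma deriv_within_cauchy_int_step [p h x dh dth] : cw h -> A x ->
  Dw (cauchy_int a p h) x dh -> Dw (cauchy_int a p (fun t => t * h t)) x dth ->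
  Dw (cauchy_int a p.+1 h) x (cauchy_int a p h x + x * dh - dth).
Proof.
move=> ch Ax Dh Dth.
pose g y := y * cauchy_int a p h y - cauchy_int a p (fun t => t * h t) y.
apply: (@eq_deriv_within _ _ _ _ g _ _ _ Ax).
  by move=> y /[1!inE] Ay; exact: cauchy_intS.
rewrite -[cauchy_int a p h x]mul1r.
exact: deriv_withinB (deriv_withinM (deriv_within_id x) Dh) Dth.
Qed.

Lemma deriv_within_cauchy_intS p [h x] : cw h -> A x ->
  Dw (cauchy_int a p.+1 h) x (p.+1%:R * cauchy_int a p h x).
Proof.
elim: p h => [|p IH] h ch Ax.
  have := deriv_within_cauchy_int_step ch Ax (deriv_within_cauchy_int0 ch Ax)
    (deriv_within_cauchy_int0 (within_continuous_idM ch) Ax).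
  by rewrite addrK mul1r.
have := deriv_within_cauchy_int_step ch Ax (IH h ch Ax)
  (IH _ (within_continuous_idM ch) Ax).
by rewrite mulrCA -addrA -mulrBr -cauchy_intS // [p.+2%:R]mulrS mulrDl mul1r.
Qed.

Lemma deriv_within_iterated_integral m [h x] : cw h -> A x ->
  Dw (iterated_integral a m.+1 h) x (iterated_integral a m h x).
Proof.
move=> ch Ax; rewrite /iterated_integral; case: m => [|p].
  rewrite fact0 invr1 -[h x]mul1r.
  exact/deriv_withinZ/deriv_within_cauchy_int0.
have := deriv_withinZ (p.+1`!%:R^-1) (deriv_within_cauchy_intS p ch Ax).
by rewrite factS natrM invfM mulrACA mulVf ?pnatr_eq0 // mul1r.
Qed.

Lemma iterated_integral_at_a m h : iterated_integral a m.+1 h a = 0.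
Proof. by rewrite /= /cauchy_int cI_itv set_itv1 Rintegral_set1 mulr0. Qed.

Lemma HK_int_against_iterated_integral m [h x] : cw h -> A x ->
  m`!%:R^-1 * HK_int_against a x h (fun t => (x - t) ^+ m)
    (fun t => - m%:R * (x - t) ^+ m.-1) = iterated_integral a m h x.
Proof.
move=> ch Ax; rewrite /HK_int_against subrr; case: m => [|p] /=.
  under eq_Rintegral do rewrite mulr0n oppr0 mul0r mulr0.
  by rewrite fact0 invr1 mul1r expr0 mulr1 cI_itv Rintegral_cst // mul0r subr0.
have int := within_continuous_integrable
  (within_continuous_cauchy_integrand x p ch) Ax.
under eq_Rintegral do rewrite mulrCA.
rewrite expr0n /= mulr0 sub0r cI_itv RintegralZl // mulNr opprK.
by rewrite factS natrM invfM mulrACA mulVf ?pnatr_eq0 // mul1r.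
Qed.
End iterated_integral.

Lemma deriv_within_horner_shift {R : realType} {a b : R} (q : {poly R})
    (x : R) :
  deriv_within a b (fun y => q.[y - a]) x q^`().[x - a].
Proof.
have -> : (fun y => q.[y - a]) = horner (q \Po ('X - a%:P)).
  by apply/funext => y; rewrite horner_comp !hornerE.
rewrite (_ : q^`().[x - a] = (q \Po ('X - a%:P))^`().[x]).
  by apply: is_derive_deriv_within; exact: is_derive_poly.
by rewrite deriv_comp derivB derivX derivC subr0 mulr1 horner_comp !hornerE.
Qed.

Definition poly_primitive {R : realType} (c : R) (q : {poly R}) : {poly R} :=
  \poly_(i < (size q).+1) if i is j.+1 then q`_j / j.+1%:R else c.

Lemma poly_primitiveK {R : realType} (c : R) (q : {poly R}) :
  (poly_primitive c q)^`() = q.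
Proof.
apply/polyP => i; rewrite coef_deriv coef_poly ltnS.
case: ltnP => [_|qi]; first by rewrite -[_ *+ i.+1]mulr_natr divfK ?pnatr_eq0.
by rewrite mul0rn nth_default.
Qed.

Lemma poly_primitive0 {R : realType} (c : R) (q : {poly R}) :
  (poly_primitive c q).[0] = c.
Proof. by rewrite horner_coef0 coef_poly. Qed.

Section Cn.
Context {R : realType} {a b : R}.
Local Notation A := (cI a b).
Local Notation Dw := (deriv_within a b).
Local Notation cw h := {within A, continuous h}.
Implicit Types (f g h : R -> R).

Lemma Cn1 f : Cn a b 1 f <-> cw f.
Proof. by split => [[D [<- [_]]]|cf] //; exists (fun=> f). Qed.

Lemma CnSS n f :
  Cn a b n.+2 f <-> exists2 g, (forall x, A x -> Dw f x (g x)) & Cn a b n.+1 g.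
Proof.
split => [[D [D0 [DS cD]]]|[g f'g [D [D0 [DS cD]]]]].
  exists (D 1%N) => [x|]; first by rewrite -D0; exact: DS 0%N erefl x.
  by exists (fun k => D k.+1); split => //; split => // k kn; exact: DS k.+1 kn.
exists (fun k => if k is k'.+1 then D k' else f); split => //; split => //.
by case=> [_ x|k kn]; [rewrite D0; exact: f'g|exact: DS k kn].
Qed.

Lemma Cn_iterated_integral m [h] (q : {poly R}) [f] : cw h ->
  (forall x, A x -> f x = iterated_integral a m h x + q.[x - a]) ->
  Cn a b m.+1 f.
Proof.
elim: m q f => [|m IH] q f ch fE.
  apply/Cn1; apply: subspace_eq_continuous (within_continuousD ch
    (deriv_within_continuous _ (fun x _ => deriv_within_horner_shift q x))).
  by move=> x /[1!inE] Ax; rewrite /from_subspace fE.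
apply/CnSS; exists (fun x => iterated_integral a m h x + q^`().[x - a]).
  move=> x Ax; apply: (eq_deriv_within _ Ax).
    by move=> y /[1!inE] Ay; exact: fE.
  exact: deriv_withinD (deriv_within_iterated_integral m ch Ax)
    (deriv_within_horner_shift _ _).
exact: IH.
Qed.

Lemma Cn_taylor m f : Cn a b m.+1 f ->
  exists2 h, C0 a b h & exists2 q : {poly R}, (size q <= m.+1)%N &
    forall x, A x -> f x = iterated_integral a m h x + q.[x - a].
Proof.
elim: m f => [|m IH] f.
  move=> /Cn1 cf; exists (fun x => f x - f a).
    by split=> [x|]; [apply: cvgB; [exact: cf|exact: cvg_cst]|rewrite subrr].
  by exists (f a)%:P => [|x _]; rewrite ?size_polyC ?leq_b1 // hornerC subrK.
move=> /CnSS [g f'g /IH [h [ch ha] [q sq gE]]].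
exists h => //; exists (poly_primitive (f a) q).
  exact: leq_trans (size_poly _ _) _.
set r := poly_primitive (f a) q.
have e'0 x : A x ->
    Dw (fun y => f y - (iterated_integral a m.+1 h y + r.[y - a])) x 0.
  move=> Ax; rewrite -(subrr (g x)) {2}gE //; apply: deriv_withinB (f'g x Ax) _.
  rewrite -[in X in Dw _ _ X](poly_primitiveK (f a) q).
  exact: deriv_withinD (deriv_within_iterated_integral m ch Ax)
    (deriv_within_horner_shift _ _).
move=> x Ax; have := deriv_within0_cst x e'0 Ax.
rewrite iterated_integral_at_a subrr poly_primitive0 add0r subrr.
by move=> /eqP; rewrite subr_eq0 => /eqP.
Qed.

End Cn.

Theorem lemma4p16 (R : realType) (a b : R) (hab : a < b) (n : nat)
    (hn : (0 < n)%N) (f : R -> R) :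
  Cn a b n f <->
  exists phi : (R -> R) -> R, D_HK a b phi /\
  exists F : R -> R, C0 a b F /\ distr_deriv_of a b phi F /\
  exists c : 'I_n -> R,
    forall x : R, cI a b x ->
      f x = (n.-1)`!%:R^-1 *
              HK_int_against a x F (fun t => (x - t) ^+ n.-1)
                (fun t => - (n.-1)%:R * (x - t) ^+ n.-2)
            + \sum_(k < n) c k * (x - a) ^+ k.
Proof.
case: n hn => // m _ /=; split.
  move=> /Cn_taylor[h [ch ha] [q sq fE]].
  pose phi psi := - \int[lebesgue_measure]_(t in cI a b) (h t * derive1 psi t).
  exists phi; split; first by exists h.
  exists h; do 2!split => //; exists (fun k => q`_k) => x Ax.
  rewrite (HK_int_against_iterated_integral m ch Ax) fE //.
  by rewrite (horner_coef_wide _ sq).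
move=> [_ [_ [F [[cF _] [_ [c fE]]]]]].
apply: (Cn_iterated_integral m (\poly_(k < m.+1) c (inord k)) cF) => x Ax.
rewrite fE // (HK_int_against_iterated_integral m cF Ax) horner_poly.
by congr (_ + _); apply: eq_bigr => k _; rewrite inord_val.
Qed.
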